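(* Let $n\ge2$, $A_0,\dots,A_{n-1}\in\mathbb{R}$, $A_n=1$, $F(a)=\sum_{k=0}^nA_ka^k$, and define $\sigma_k$ by $(-1)^k\sigma_k=A_{n-k}$, $0\le k\le n$. Let $x(a)$ be smooth with $\dot x\neq0$ on an open interval $I\subset(0,\infty)$, $H=\Pi^2+aP_y^2$, $\Pi=\frac a{\dot x}P_a$, $G=\sum_{k=0}^nA_kH^kP_y^{2(n-k)}$, and $$Q_1=\sum_{k=1}^n(-1)^k\beta_k(a)\,H^{n-k}\,\Pi\,P_y^{2k-1},\qquad S_1=Q_1+yG .$$ If the functions $\beta_k$ satisfy $$\dot\beta_1=\dot x,\qquad \dot\beta_{k+1}=-a\dot\beta_k-\tfrac12\beta_k+\sigma_k\dot x\ \ (1\le k\le n-1),\qquad 0=-a\dot\beta_n-\tfrac12\beta_n+\sigma_n\dot x,$$ then $\{H,S_1\}=0$. Moreover, if $F=\prod_{i=1}^n(a-a_i)$ with distinct real $a_i$ and $x=\sum_{i=1}^n\xi_i\Delta_i^{-1/2}$ with $\Delta_i=\epsilon_i(a-a_i)>0$, $\epsilon_i\in\{\pm1\}$, $\xi_i\in\mathbb{R}$, then $\beta_k=\sum_{i=1}^n\frac{\xi_i}{\sqrt{\Delta_i}}\sigma^i_{k-1}$ ($1\le k\le n$) solves this system.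
   Context: A dot denotes $d/da$; $\{\cdot,\cdot\}$ is the canonical Poisson bracket with $(P_a,P_y)$ conjugate to $(a,y)$. For each $i$, $\sigma^i_m$ ($-1\le m\le n$) are defined by $\prod_{l\neq i}(a-a_l)=\sum_{m=0}^{n-1}(-1)^m\sigma^i_ma^{n-1-m}$ with $\sigma^i_{-1}=\sigma^i_n=0$. *)

From Stdlib Require Import Reals List.
From Coquelicot Require Import Coquelicot.
Open Scope R_scope.

(* sumR m n f = f m + f (m+1) + ... + f n  (empty if n < m) *)
Definition sumR (m n : nat) (f : nat -> R) : R :=
  fold_right (fun k acc => f k + acc) 0 (List.seq m (S n - m)).

(* prodR m n f = f m * ... * f n  (empty product 1 if n < m) *)
Definition prodR (m n : nat) (f : nat -> R) : R :=
  fold_right (fun k acc => f k * acc) 1 (List.seq m (S n - m)).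

(* Phase-space functions of (a, y, P_a, P_y). *)
Definition phase := R -> R -> R -> R -> R.

Definition PB (f g : phase) : phase := fun a y pa py =>
    Derive (fun t => f t y pa py) a * Derive (fun t => g a y t py) pa
  - Derive (fun t => f a y t py) pa * Derive (fun t => g t y pa py) a
  + Derive (fun t => f a t pa py) y * Derive (fun t => g a y pa t) py
  - Derive (fun t => f a y pa t) py * Derive (fun t => g a t pa py) y.

Definition Pi (x : R -> R) (a pa : R) : R := a / Derive x a * pa.

Definition Hf (x : R -> R) : phase := fun a y pa py =>
  (Pi x a pa) ^ 2 + a * py ^ 2.

Definition Gf (n : nat) (A : nat -> R) (x : R -> R) : phase := fun a y pa py =>
  sumR 0 n (fun k => A k * (Hf x a y pa py) ^ k * py ^ (2 * (n - k))).

Definition Q1f (n : nat) (beta : nat -> R -> R) (x : R -> R) : phase :=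
  fun a y pa py =>
  sumR 1 n (fun k => (-1) ^ k * beta k a * (Hf x a y pa py) ^ (n - k)
                      * Pi x a pa * py ^ (2 * k - 1)).

Definition S1f (n : nat) (A : nat -> R) (beta : nat -> R -> R) (x : R -> R)
  : phase := fun a y pa py =>
  Q1f n beta x a y pa py + y * Gf n A x a y pa py.

Definition sigma (n : nat) (A : nat -> R) (k : nat) : R := (-1) ^ k * A (n - k)%nat.

Definition in_interval (lo hi : Rbar) (a : R) : Prop :=
  Rbar_lt lo a /\ Rbar_lt a hi.

Definition beta_system (n : nat) (A : nat -> R) (x : R -> R)
    (beta : nat -> R -> R) (I : R -> Prop) : Prop :=
  (forall k a, (1 <= k <= n)%nat -> I a -> ex_derive (beta k) a) /\
  (forall a, I a -> Derive (beta 1%nat) a = Derive x a) /\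
  (forall k a, (1 <= k <= n - 1)%nat -> I a ->
      Derive (beta (S k)) a =
        - a * Derive (beta k) a - / 2 * beta k a + sigma n A k * Derive x a) /\
  (forall a, I a ->
      0 = - a * Derive (beta n) a - / 2 * beta n a + sigma n A n * Derive x a).

(* {H, .} is a derivation on functions differentiable at the point, and it kills
   functions of H and P_y alone.  On the remaining building blocks of S_1 it acts by
   {H, y} = -2 a P_y,  {H, Pi} = (a / x') P_y^2  and  {H, beta(a)} = -2 Pi (a / x') beta'(a),
   so that
     {H, S_1} = (a / x') sum_k (-1)^k P_y^(2k-1) H^(n-k) (beta_k P_y^2 - 2 Pi^2 beta_k')
                - 2 a P_y G.
   After substituting Pi^2 = H - a P_y^2 and the recursion for beta_k (with beta_(n+1) = 0)
   the k-th summand is 2 x' P_y A_(n-k) H^(n-k) P_y^(2k) plus a telescoping difference, and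
   the sum collapses to 2 x' P_y G, which cancels the last term.

   The system for beta is linear in (x, beta), so for the explicit solution it suffices to
   treat one term u = xi Delta^(-1/2) with beta_k = u sigma^i_(k-1).  Such u satisfies
   2 (a - a_i) u' = -u, which reduces the system to sigma_k = sigma^i_k + a_i sigma^i_(k-1),
   the coefficient identity of F(t) = (t - a_i) prod_(l <> i) (t - a_l). *)

From Pilot Require Import Defs.
From Stdlib Require Import Reals List Lia Lra.
From Coquelicot Require Import Coquelicot.
Open Scope R_scope.

(** * Finite sums *)

Lemma sumR_sum_n_m (m n : nat) (f : nat -> R) : sumR m n f = sum_n_m f m n.
Proof.
  unfold sumR, sum_n_m, Iter.iter_nat.
  generalize (S n - m)%nat; intros len; revert m.
  induction len as [|len IH]; intros m; [reflexivity|].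
  simpl; rewrite IH; reflexivity.
Qed.

Lemma sumR_ext (f g : nat -> R) (m n : nat) :
  (forall k, (m <= k <= n)%nat -> f k = g k) -> sumR m n f = sumR m n g.
Proof. intros E; rewrite !sumR_sum_n_m; apply sum_n_m_ext_loc, E. Qed.

Lemma sumR_plus (f g : nat -> R) (m n : nat) :
  sumR m n (fun k => f k + g k) = sumR m n f + sumR m n g.
Proof. rewrite !sumR_sum_n_m; apply (sum_n_m_plus (G := R_AbelianMonoid) f g). Qed.

Lemma sumR_scal (c : R) (f : nat -> R) (m n : nat) :
  sumR m n (fun k => c * f k) = c * sumR m n f.
Proof. rewrite !sumR_sum_n_m; apply (sum_n_m_mult_l (K := R_Ring) c f). Qed.

Lemma sumR_minus (f g : nat -> R) (m n : nat) :
  sumR m n (fun k => f k - g k) = sumR m n f - sumR m n g.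
Proof.
  rewrite (sumR_ext _ (fun k => f k + -1 * g k)), sumR_plus, sumR_scal by (intros; ring).
  ring.
Qed.

Lemma sumR_eq_0 (f : nat -> R) (m n : nat) :
  (forall k, (m <= k <= n)%nat -> f k = 0) -> sumR m n f = 0.
Proof.
  intros E; rewrite (sumR_ext _ (fun k => 0 * f k)), sumR_scal by (intros k Hk; rewrite (E k Hk); ring).
  ring.
Qed.

Lemma sumR_first (f : nat -> R) (m n : nat) :
  (m <= n)%nat -> sumR m n f = f m + sumR (S m) n f.
Proof. intros Hmn; rewrite !sumR_sum_n_m; apply (sum_Sn_m (G := R_AbelianMonoid) f), Hmn. Qed.

Lemma sumR_last (f : nat -> R) (m n : nat) :
  (m <= S n)%nat -> sumR m (S n) f = sumR m n f + f (S n).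
Proof. intros Hmn; rewrite !sumR_sum_n_m; apply (sum_n_Sm (G := R_AbelianMonoid) f), Hmn. Qed.

Lemma sumR_shift (f : nat -> R) (m n : nat) :
  sumR (S m) (S n) f = sumR m n (fun k => f (S k)).
Proof. rewrite !sumR_sum_n_m; symmetry; apply (sum_n_m_S (G := R_AbelianMonoid) f). Qed.

Lemma sumR_telescope (c : nat -> R) (m n : nat) :
  (m <= S n)%nat -> sumR m n (fun k => c k - c (S k)) = c m - c (S n).
Proof.
  induction n as [|n IH]; intros Hmn.
  - destruct m as [|[|m]]; [| | lia]; unfold sumR; simpl; ring.
  - destruct (Nat.eq_dec m (S (S n))) as [->|Hm].
    + unfold sumR; rewrite Nat.sub_diag; simpl; ring.
    + rewrite sumR_last, IH by lia; ring.
Qed.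

Lemma sumR_rev (f : nat -> R) (n : nat) :
  sumR 0 n f = sumR 0 n (fun k => f (n - k)%nat).
Proof.
  revert f; induction n as [|n IH]; intros f; [reflexivity|].
  rewrite sumR_last, IH, (sumR_first (fun k => f (S n - k)%nat) 0), sumR_shift by lia.
  rewrite Nat.sub_0_r, Rplus_comm; reflexivity.
Qed.

Lemma is_derive_sumR (f : nat -> R -> R) (m n : nat) (x : R) :
  (forall k, (m <= k <= n)%nat -> ex_derive (f k) x) ->
  is_derive (fun t => sumR m n (fun k => f k t)) x (sumR m n (fun k => Derive (f k) x)).
Proof.
  intros Hf; unfold sumR.
  assert (Hl : forall k, In k (seq m (S n - m)) -> ex_derive (f k) x)
    by (intros k Hk; apply in_seq in Hk; apply Hf; lia).
  induction (seq m (S n - m)) as [|k l IH]; simpl.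
  - apply (is_derive_const (V := R_NormedModule)).
  - apply (is_derive_plus (fun t => f k t)).
    + apply Derive_correct, Hl; left; reflexivity.
    + apply IH; intros j Hj; apply Hl; right; exact Hj.
Qed.

Lemma Derive_sumR (f : nat -> R -> R) (m n : nat) (x : R) :
  (forall k, (m <= k <= n)%nat -> ex_derive (f k) x) ->
  Derive (fun t => sumR m n (fun k => f k t)) x = sumR m n (fun k => Derive (f k) x).
Proof. intros Hf; apply is_derive_unique, is_derive_sumR, Hf. Qed.

(** * The Poisson bracket as a derivation *)

Definition ex_partials (g : phase) (a y pa py : R) : Prop :=
  ex_derive (fun t => g t y pa py) a /\ ex_derive (fun t => g a t pa py) y /\
  ex_derive (fun t => g a y t py) pa /\ ex_derive (fun t => g a y pa t) py.

(* Rewriting with the [Derive] lemmas eta-reduces the [P_y]-slice [fun t => g a y pa t]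
   to [g a y pa]; [ring] only identifies the two forms after eta-expanding again. *)
Ltac eta_expand_Derive :=
  repeat match goal with
  | |- context [Derive (?g ?a ?y ?pa) ?q] =>
      change (Derive (g a y pa) q) with (Derive (fun t => g a y pa t) q)
  end.

Section PoissonCalculus.

Variables (a y pa py : R).

Lemma ex_partials_fun_a (u : R -> R) :
  ex_derive u a -> ex_partials (fun t _ _ _ => u t) a y pa py.
Proof. intros Hu; repeat split; auto using ex_derive_const. Qed.

Lemma ex_partials_coord_y : ex_partials (fun _ t _ _ => t) a y pa py.
Proof. repeat split; auto using ex_derive_const, ex_derive_id. Qed.

Lemma ex_partials_coord_pa : ex_partials (fun _ _ t _ => t) a y pa py.
Proof. repeat split; auto using ex_derive_const, ex_derive_id. Qed.

Lemma ex_partials_coord_py : ex_partials (fun _ _ _ t => t) a y pa py.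
Proof. repeat split; auto using ex_derive_const, ex_derive_id. Qed.

Lemma ex_partials_plus (g h : phase) :
  ex_partials g a y pa py -> ex_partials h a y pa py ->
  ex_partials (fun a y pa py => g a y pa py + h a y pa py) a y pa py.
Proof. intros (?&?&?&?) (?&?&?&?); repeat split; auto using ex_derive_plus. Qed.

Lemma ex_partials_mult (g h : phase) :
  ex_partials g a y pa py -> ex_partials h a y pa py ->
  ex_partials (fun a y pa py => g a y pa py * h a y pa py) a y pa py.
Proof. intros (?&?&?&?) (?&?&?&?); repeat split; auto using ex_derive_mult. Qed.

Lemma ex_partials_pow (g : phase) (m : nat) :
  ex_partials g a y pa py -> ex_partials (fun a y pa py => g a y pa py ^ m) a y pa py.
Proof. intros (?&?&?&?); repeat split; auto using ex_derive_pow. Qed.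

Lemma ex_partials_sumR (g : nat -> phase) (m n : nat) :
  (forall k, (m <= k <= n)%nat -> ex_partials (g k) a y pa py) ->
  ex_partials (fun a y pa py => sumR m n (fun k => g k a y pa py)) a y pa py.
Proof.
  intros Hg; repeat split; eexists; apply is_derive_sumR; intros k Hk; apply Hg, Hk.
Qed.

Variable f : phase.

Lemma PB_plus_r (g h : phase) :
  ex_partials g a y pa py -> ex_partials h a y pa py ->
  PB f (fun a y pa py => g a y pa py + h a y pa py) a y pa py
  = PB f g a y pa py + PB f h a y pa py.
Proof.
  intros (?&?&?&?) (?&?&?&?); unfold PB; rewrite !Derive_plus by assumption.
  eta_expand_Derive; ring.
Qed.

Lemma PB_mult_r (g h : phase) :
  ex_partials g a y pa py -> ex_partials h a y pa py ->
  PB f (fun a y pa py => g a y pa py * h a y pa py) a y pa py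
  = g a y pa py * PB f h a y pa py + h a y pa py * PB f g a y pa py.
Proof.
  intros (?&?&?&?) (?&?&?&?); unfold PB; rewrite !Derive_mult by assumption.
  eta_expand_Derive; ring.
Qed.

Lemma PB_pow_r (g : phase) (m : nat) :
  ex_partials g a y pa py ->
  PB f (fun a y pa py => g a y pa py ^ m) a y pa py
  = INR m * g a y pa py ^ pred m * PB f g a y pa py.
Proof.
  intros (?&?&?&?); unfold PB; rewrite !Derive_pow by assumption.
  eta_expand_Derive; ring.
Qed.

Lemma PB_sumR (g : nat -> phase) (m n : nat) :
  (forall k, (m <= k <= n)%nat -> ex_partials (g k) a y pa py) ->
  PB f (fun a y pa py => sumR m n (fun k => g k a y pa py)) a y pa py
  = sumR m n (fun k => PB f (g k) a y pa py).
Proof.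
  intros Hg; unfold PB.
  rewrite !(Derive_sumR (fun k t => g k _ _ _ _)) by (intros k Hk; apply Hg, Hk).
  rewrite <- !sumR_scal, <- sumR_minus, <- sumR_plus, <- sumR_minus; reflexivity.
Qed.

Lemma PB_fun_a (u : R -> R) :
  PB f (fun t _ _ _ => u t) a y pa py = - Derive (fun t => f a y t py) pa * Derive u a.
Proof.
  unfold PB; rewrite !Derive_const.
  change (Derive (fun t => u t) a) with (Derive u a); ring.
Qed.

Lemma PB_coord_y : PB f (fun _ t _ _ => t) a y pa py = - Derive (fun t => f a y pa t) py.
Proof.
  unfold PB; rewrite !Derive_const.
  change (Derive (fun t => t) y) with (Derive id y); rewrite Derive_id; ring.
Qed.

Lemma PB_coord_py : PB f (fun _ _ _ t => t) a y pa py = Derive (fun t => f a t pa py) y.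
Proof.
  unfold PB; rewrite !Derive_const.
  change (Derive (fun t => t) py) with (Derive id py); rewrite Derive_id; ring.
Qed.

Lemma PB_self : PB f f a y pa py = 0.
Proof. unfold PB; ring. Qed.

Lemma PB_antisym (g : phase) : PB f g a y pa py = - PB g f a y pa py.
Proof. unfold PB; ring. Qed.

End PoissonCalculus.

(** * Vanishing of the bracket of [H] with [S_1] *)

Section Hamiltonian.

Variables (x : R -> R) (a y pa py : R).
Hypotheses (Hx' : Derive x a <> 0) (Hx'' : ex_derive (Derive x) a).

Lemma ex_partials_Pi : ex_partials (fun a _ pa _ => Pi x a pa) a y pa py.
Proof.
  apply (ex_partials_mult _ _ _ _ (fun t _ _ _ => t / Derive x t) (fun _ _ t _ => t)).
  - apply ex_partials_fun_a; auto_derive; auto.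
  - apply ex_partials_coord_pa.
Qed.

Lemma ex_partials_Hf : ex_partials (Hf x) a y pa py.
Proof.
  apply ex_partials_plus.
  - apply ex_partials_pow, ex_partials_Pi.
  - apply ex_partials_mult.
    + apply ex_partials_fun_a, ex_derive_id.
    + apply ex_partials_pow, ex_partials_coord_py.
Qed.

(* The closure lemmas are selected by the syntactic shape of the goal: plain [apply] lets
   unification unfold the operations on [R], which does not terminate. *)
Ltac solve_partials :=
  repeat match goal with
  | |- forall k : nat, _ -> _ => intros ? ?
  | |- ex_partials (fun a y pa py => @?g a y pa py + @?h a y pa py) _ _ _ _ =>
      apply (ex_partials_plus _ _ _ _ g h)
  | |- ex_partials (fun a y pa py => @?g a y pa py * @?h a y pa py) _ _ _ _ =>
      apply (ex_partials_mult _ _ _ _ g h)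
  | |- ex_partials (fun a y pa py => @?g a y pa py ^ _) _ _ _ _ =>
      apply (ex_partials_pow _ _ _ _ g)
  | |- ex_partials (fun a y pa py => sumR _ _ (fun k => @?g k a y pa py)) _ _ _ _ =>
      apply (ex_partials_sumR _ _ _ _ g)
  | |- ex_partials (fun a _ pa _ => Pi _ a pa) _ _ _ _ => apply ex_partials_Pi
  | |- ex_partials (Hf _) _ _ _ _ => apply ex_partials_Hf
  | |- ex_partials (fun a y pa py => Hf _ a y pa py) _ _ _ _ => apply ex_partials_Hf
  | |- ex_partials (fun _ t _ _ => t) _ _ _ _ => apply ex_partials_coord_y
  | |- ex_partials (fun _ _ t _ => t) _ _ _ _ => apply ex_partials_coord_pa
  | |- ex_partials (fun _ _ _ t => t) _ _ _ _ => apply ex_partials_coord_py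
  | |- ex_partials (fun t _ _ _ => @?u t) _ _ _ _ => apply (ex_partials_fun_a _ _ _ _ u)
  | |- ex_derive (fun _ => _) _ => apply ex_derive_const
  | |- ex_derive (fun t => t) _ => apply ex_derive_id
  end.

Lemma Derive_Pi_pa : Derive (fun t => Pi x a t) pa = a / Derive x a.
Proof. apply is_derive_unique; unfold Pi; auto_derive; [exact I | ring]. Qed.

Lemma Derive_Hf_pa : Derive (fun t => Hf x a y t py) pa = 2 * Pi x a pa * (a / Derive x a).
Proof. apply is_derive_unique; unfold Hf, Pi; auto_derive; [exact I | ring]. Qed.

Lemma Derive_Hf_py : Derive (fun t => Hf x a y pa t) py = 2 * a * py.
Proof. apply is_derive_unique; unfold Hf; auto_derive; [exact I | ring]. Qed.

Lemma PB_Hf_fun_a (u : R -> R) :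
  PB (Hf x) (fun t _ _ _ => u t) a y pa py = - 2 * Pi x a pa * (a / Derive x a) * Derive u a.
Proof. rewrite PB_fun_a, Derive_Hf_pa; ring. Qed.

Lemma PB_Hf_y : PB (Hf x) (fun _ t _ _ => t) a y pa py = - 2 * a * py.
Proof. rewrite PB_coord_y, Derive_Hf_py; ring. Qed.

Lemma PB_Hf_py : PB (Hf x) (fun _ _ _ t => t) a y pa py = 0.
Proof. rewrite PB_coord_py; unfold Hf; apply Derive_const. Qed.

Lemma PB_Hf_Pi : PB (Hf x) (fun a _ pa _ => Pi x a pa) a y pa py = a / Derive x a * py ^ 2.
Proof.
  rewrite PB_antisym; unfold Hf.
  rewrite PB_plus_r, PB_pow_r, PB_self, PB_mult_r, PB_pow_r, PB_fun_a, PB_coord_py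
    by solve_partials.
  rewrite Derive_Pi_pa, Derive_const.
  change (Derive (fun t => t) a) with (Derive id a); rewrite Derive_id; ring.
Qed.

Lemma PB_Hf_monomial (c : R) (u : R -> R) (m e : nat) :
  ex_derive u a ->
  PB (Hf x) (fun a y pa py => c * u a * Hf x a y pa py ^ m * Pi x a pa * py ^ e) a y pa py
  = c * py ^ e * Hf x a y pa py ^ m * (a / Derive x a)
    * (u a * py ^ 2 - 2 * Pi x a pa ^ 2 * Derive u a).
Proof.
  intros Hu.
  rewrite !PB_mult_r by (solve_partials; auto).
  rewrite !PB_pow_r by (solve_partials; auto).
  rewrite PB_self, PB_Hf_py, PB_Hf_Pi, !PB_Hf_fun_a, Derive_const; ring.
Qed.

Lemma PB_Hf_Gf (n : nat) (A : nat -> R) : PB (Hf x) (Gf n A x) a y pa py = 0.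
Proof.
  unfold Gf; rewrite PB_sumR by solve_partials.
  apply sumR_eq_0; intros k _; rewrite !PB_mult_r, !PB_pow_r by solve_partials.
  rewrite PB_self, PB_Hf_py, PB_Hf_fun_a, Derive_const; ring.
Qed.

Lemma PB_Hf_S1 (n : nat) (A : nat -> R) (beta : nat -> R -> R) :
  (forall k, (1 <= k <= n)%nat -> ex_derive (beta k) a) ->
  PB (Hf x) (S1f n A beta x) a y pa py
  = sumR 1 n (fun k => (-1) ^ k * py ^ (2 * k - 1) * Hf x a y pa py ^ (n - k)
        * (a / Derive x a) * (beta k a * py ^ 2 - 2 * Pi x a pa ^ 2 * Derive (beta k) a))
    - 2 * a * py * Gf n A x a y pa py.
Proof.
  intros Hb; unfold S1f.
  rewrite PB_plus_r, PB_mult_r, PB_Hf_y, PB_Hf_Gf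
    by (unfold Q1f, Gf; solve_partials; apply Hb; lia).
  unfold Q1f; rewrite PB_sumR by (solve_partials; apply Hb; lia).
  rewrite (sumR_ext _ _ _ _ (fun k Hk => PB_Hf_monomial _ _ _ _ (Hb k Hk))); ring.
Qed.

End Hamiltonian.

Lemma neg1_pow_sqr (k : nat) : (-1) ^ k * (-1) ^ k = 1.
Proof. rewrite <- Rpow_mult_distr, <- (pow1 k); f_equal; ring. Qed.

Lemma sigma_neg1_pow (n : nat) (A : nat -> R) (k : nat) :
  (-1) ^ k * Defs.sigma n A k = A (n - k)%nat.
Proof. unfold Defs.sigma; rewrite <- Rmult_assoc, neg1_pow_sqr; ring. Qed.

Section BetaRecursion.

Variables (n : nat) (A b d : nat -> R) (D h q a : R).
Hypotheses (Hn : (1 <= n)%nat) (HAn : A n = 1) (Hd1 : d 1%nat = D) (Hdn : d (S n) = 0)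
  (Hb : forall k, (1 <= k <= n)%nat -> b k = 2 * (Defs.sigma n A k * D - a * d k - d (S k))).

Let c (k : nat) : R := (-1) ^ k * q ^ (2 * k - 1) * h ^ (S n - k) * d k.

Lemma beta_recursion_term (k : nat) : (1 <= k <= n)%nat ->
  (-1) ^ k * q ^ (2 * k - 1) * h ^ (n - k) * (b k * q ^ 2 - 2 * (h - a * q ^ 2) * d k)
  = 2 * D * q * (A (n - k)%nat * h ^ (n - k) * q ^ (2 * k)) - 2 * (c k - c (S k)).
Proof.
  intros Hk; rewrite Hb by exact Hk; unfold c.
  rewrite <- (sigma_neg1_pow n A k).
  replace (2 * S k - 1)%nat with (2 * k - 1 + 2)%nat by lia.
  replace (S n - k)%nat with (n - k + 1)%nat by lia.
  replace (S n - S k)%nat with (n - k)%nat by lia.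
  replace (q ^ (2 * k)) with (q ^ (2 * k - 1 + 1)) by (f_equal; lia).
  rewrite !pow_add, <- (tech_pow_Rmult (-1) k); ring.
Qed.

Lemma beta_recursion_sum :
  sumR 1 n (fun k => (-1) ^ k * q ^ (2 * k - 1) * h ^ (n - k)
                     * (b k * q ^ 2 - 2 * (h - a * q ^ 2) * d k))
  = 2 * D * q * sumR 0 n (fun j => A j * h ^ j * q ^ (2 * (n - j))).
Proof.
  rewrite (sumR_ext _ _ _ _ beta_recursion_term), sumR_minus, !sumR_scal, sumR_telescope
    by lia.
  rewrite sumR_rev, (sumR_first _ 0) by lia.
  rewrite (sumR_ext (fun k => A (n - k)%nat * h ^ (n - k) * q ^ (2 * (n - (n - k))))
                    (fun k => A (n - k)%nat * h ^ (n - k) * q ^ (2 * k)))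
    by (intros k Hk; replace (n - (n - k))%nat with k by lia; reflexivity).
  unfold c; simpl (_ - _)%nat; rewrite Nat.sub_0_r, Nat.sub_diag, Hd1, Hdn, HAn.
  simpl (2 * 0)%nat; ring.
Qed.

End BetaRecursion.

(* With [beta_{n+1}' := 0], the last equation of [beta_system] becomes the case [k = n]
   of the recursion. *)
Definition beta_deriv_ext (n : nat) (beta : nat -> R -> R) (a : R) (k : nat) : R :=
  if (k <=? n)%nat then Derive (beta k) a else 0.

Lemma beta_system_recursion (n : nat) (A : nat -> R) (x : R -> R) (beta : nat -> R -> R)
    (I : R -> Prop) (a : R) :
  beta_system n A x beta I -> I a ->
  forall k, (1 <= k <= n)%nat ->
  beta k a = 2 * (Defs.sigma n A k * Derive x a - a * beta_deriv_ext n beta a k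
                  - beta_deriv_ext n beta a (S k)).
Proof.
  intros (_ & _ & Hrec & Hlast) Ha k Hk; unfold beta_deriv_ext.
  replace (k <=? n)%nat with true by (symmetry; apply Nat.leb_le; lia).
  destruct (Nat.eq_dec k n) as [->|Hkn].
  - rewrite (proj2 (Nat.leb_gt _ _) (Nat.lt_succ_diag_r n)).
    specialize (Hlast a Ha); lra.
  - replace (S k <=? n)%nat with true by (symmetry; apply Nat.leb_le; lia).
    rewrite (Hrec k a) by (lia || exact Ha); lra.
Qed.

Lemma PB_Hf_S1_eq_0 (n : nat) (A : nat -> R) (x : R -> R) (beta : nat -> R -> R)
    (I : R -> Prop) (a y pa py : R) :
  (1 <= n)%nat -> A n = 1 -> I a -> Derive x a <> 0 -> ex_derive (Derive x) a ->
  beta_system n A x beta I ->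
  PB (Hf x) (S1f n A beta x) a y pa py = 0.
Proof.
  intros Hn HAn Ha Hx' Hx'' Hsys.
  pose proof Hsys as (Hex & H1 & _).
  rewrite PB_Hf_S1 by (auto; intros k Hk; apply Hex; auto).
  set (h := Hf x a y pa py).
  rewrite (sumR_ext _ (fun k => a / Derive x a * ((-1) ^ k * py ^ (2 * k - 1) * h ^ (n - k)
             * (beta k a * py ^ 2 - 2 * (h - a * py ^ 2) * beta_deriv_ext n beta a k)))).
  2: { intros k Hk; unfold beta_deriv_ext, h, Hf.
       replace (k <=? n)%nat with true by (symmetry; apply Nat.leb_le; lia); ring. }
  rewrite sumR_scal, (beta_recursion_sum n A (fun k => beta k a) (beta_deriv_ext n beta a)
    (Derive x a) h py a Hn HAn).
  - unfold Gf; fold h; field; exact Hx'.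
  - unfold beta_deriv_ext; rewrite (proj2 (Nat.leb_le 1 n) Hn); apply H1, Ha.
  - unfold beta_deriv_ext; rewrite (proj2 (Nat.leb_gt _ _) (Nat.lt_succ_diag_r n)); reflexivity.
  - exact (beta_system_recursion n A x beta I a Hsys Ha).
Qed.

(** * The explicit solution *)

Lemma prodR_D1 (f : nat -> R) (m n i : nat) : (m <= i <= n)%nat ->
  prodR m n f = f i * prodR m n (fun l => if (l =? i)%nat then 1 else f l).
Proof.
  intros Hi; unfold prodR.
  assert (Hin : In i (seq m (S n - m))) by (apply in_seq; lia).
  pose proof (seq_NoDup (S n - m) m) as Hnd.
  revert Hin Hnd; generalize (seq m (S n - m)); intros l.
  induction l as [|k l IH]; intros Hin Hnd; [destruct Hin|].
  apply NoDup_cons_iff in Hnd as [Hk Hnd]; simpl.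
  destruct (Nat.eqb_spec k i) as [->|Hki].
  - rewrite Rmult_1_l; f_equal; clear IH Hin Hnd.
    induction l as [|j l IHl]; [reflexivity|]; simpl.
    destruct (Nat.eqb_spec j i) as [->|_]; [destruct Hk; left; reflexivity|].
    rewrite IHl by (intros H; apply Hk; right; exact H); reflexivity.
  - destruct Hin as [E|Hin]; [contradiction|].
    rewrite IH by assumption; ring.
Qed.

Lemma poly_coef_eq_0 (N : nat) (c : nat -> R) :
  (forall t, sumR 0 N (fun k => c k * t ^ k) = 0) -> forall k, (k <= N)%nat -> c k = 0.
Proof.
  revert c; induction N as [|N IH]; intros c Hc k Hk.
  - specialize (Hc 0); unfold sumR in Hc; simpl in Hc.
    replace k with 0%nat by lia; lra.
  - set (Q t := sumR 0 N (fun j => c (S j) * t ^ j)).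
    assert (HP : forall t, sumR 0 (S N) (fun k => c k * t ^ k) = c 0%nat + t * Q t).
    { intros t; rewrite (sumR_first _ 0), sumR_shift by lia; unfold Q.
      rewrite <- sumR_scal; simpl pow; f_equal; [ring|].
      apply sumR_ext; intros j _; ring. }
    assert (Hc0 : c 0%nat = 0) by (specialize (Hc 0); rewrite HP in Hc; lra).
    assert (HQ : forall t, t * Q t = 0) by (intros t; specialize (Hc t); rewrite HP in Hc; lra).
    assert (HQ0 : Q 0 = 0).
    { assert (Hd : is_derive (fun t => t * Q t) 0 (Q 0)).
      { assert (ex_derive Q 0).
        { eexists; apply (is_derive_sumR (fun j t => c (S j) * t ^ j)).
          intros j _; auto_derive; exact I. }
        auto_derive; [assumption | ring]. }
      rewrite <- (is_derive_unique _ _ _ Hd), (Derive_ext _ (fun _ => 0)) by exact HQ.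
      apply Derive_const. }
    assert (HQz : forall t, Q t = 0).
    { intros t; destruct (Req_dec t 0) as [->|Ht]; [exact HQ0|].
      apply (Rmult_eq_reg_l t); [rewrite HQ; ring | exact Ht]. }
    destruct k as [|k]; [exact Hc0|].
    apply (IH (fun j => c (S j))); [exact HQz | lia].
Qed.

Lemma linear_factor_coef (N : nat) (A p : nat -> R) (r : R) :
  (forall t, sumR 0 (S N) (fun k => A k * t ^ k) = (t - r) * sumR 0 N (fun j => p j * t ^ j)) ->
  A 0%nat = - r * p 0%nat /\ (forall k, (1 <= k <= N)%nat -> A k = p (k - 1)%nat - r * p k)
  /\ A (S N) = p N.
Proof.
  intros HA.
  set (p_up k := match k with O => 0 | S j => p j end).
  set (p_ext k := if (k <=? N)%nat then p k else 0).
  assert (Hz : forall k, (k <= S N)%nat -> A k - (p_up k - r * p_ext k) = 0).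
  { apply poly_coef_eq_0; intros t.
    rewrite (sumR_ext _ (fun k => A k * t ^ k - (p_up k * t ^ k - r * (p_ext k * t ^ k))))
      by (intros; ring).
    rewrite !sumR_minus, sumR_scal, HA.
    rewrite (sumR_first (fun k => p_up k * t ^ k) 0), sumR_shift by lia.
    rewrite (sumR_last (fun k => p_ext k * t ^ k)) by lia.
    rewrite (sumR_ext (fun k => p_up (S k) * t ^ S k) (fun k => t * (p k * t ^ k))),
      (sumR_ext (fun k => p_ext k * t ^ k) (fun k => p k * t ^ k)), sumR_scal.
    - unfold p_up, p_ext; rewrite (proj2 (Nat.leb_gt _ _) (Nat.lt_succ_diag_r N)); ring.
    - intros k Hk; unfold p_ext; rewrite (proj2 (Nat.leb_le k N)) by lia; reflexivity.
    - intros k _; simpl; ring. }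
  unfold p_up, p_ext in Hz; split; [|split].
  - specialize (Hz 0%nat (Nat.le_0_l _)); simpl in Hz; lra.
  - intros [|k] Hk; [lia|].
    specialize (Hz (S k) ltac:(lia)); rewrite (proj2 (Nat.leb_le (S k) N)) in Hz by lia.
    rewrite Nat.sub_1_r; simpl Nat.pred; lra.
  - specialize (Hz (S N) (le_n _)).
    rewrite (proj2 (Nat.leb_gt _ _) (Nat.lt_succ_diag_r N)) in Hz; lra.
Qed.

Lemma sigma_root_factor (n : nat) (A : nat -> R) (r : R) (s : nat -> R) :
  (1 <= n)%nat -> A n = 1 ->
  (forall t, sumR 0 n (fun k => A k * t ^ k)
             = (t - r) * sumR 0 (n - 1) (fun m => (-1) ^ m * s m * t ^ (n - 1 - m))) ->
  s 0%nat = 1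
  /\ (forall k, (1 <= k <= n - 1)%nat -> Defs.sigma n A k = s k + r * s (k - 1)%nat)
  /\ Defs.sigma n A n = r * s (n - 1)%nat.
Proof.
  intros Hn HAn HF; destruct n as [|N]; [lia|].
  replace (S N - 1)%nat with N in * by lia.
  destruct (linear_factor_coef N A (fun j => (-1) ^ (N - j) * s (N - j)%nat) r)
    as (H0 & Hmid & Htop).
  { intros t; rewrite HF, sumR_rev; f_equal; apply sumR_ext; intros j Hj.
    replace (N - (N - j))%nat with j by lia; ring. }
  unfold Defs.sigma; split; [|split].
  - rewrite Nat.sub_diag in Htop; simpl in Htop; lra.
  - intros [|k] Hk; [lia|].
    rewrite Hmid by lia.
    replace (N - (S N - S k - 1))%nat with (S k) by lia.
    replace (N - (S N - S k))%nat with k by lia.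
    replace (S N - S k - 1)%nat with (N - S k)%nat by lia.
    rewrite Nat.sub_1_r, <- (tech_pow_Rmult (-1) k); simpl Nat.pred.
    transitivity ((-1) ^ k * (-1) ^ k * (s (S k) + r * s k)); [ring|].
    rewrite neg1_pow_sqr; ring.
  - rewrite Nat.sub_diag, H0, Nat.sub_0_r, <- (tech_pow_Rmult (-1) N).
    transitivity ((-1) ^ N * (-1) ^ N * (r * s N)); [ring|].
    rewrite neg1_pow_sqr; ring.
Qed.

Lemma is_derive_div_sqrt (c e r a : R) :
  0 < e * (a - r) ->
  is_derive (fun t => c / sqrt (e * (t - r))) a (- (c / sqrt (e * (a - r))) / (2 * (a - r))).
Proof.
  intros Hp.
  assert (Hs : 0 < sqrt (e * (a - r))) by (apply sqrt_lt_R0; exact Hp).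
  assert (Hss : sqrt (e * (a - r)) * sqrt (e * (a - r)) = e * (a - r))
    by (apply sqrt_sqrt; lra).
  assert (Har : a - r <> 0) by (intros E; rewrite E in Hp; lra).
  assert (He : e <> 0) by (intros E; rewrite E in Hp; lra).
  auto_derive.
  - change (a + - r) with (a - r); repeat split; lra.
  - change (a + - r) with (a - r); rewrite Hss; field; repeat split; lra.
Qed.

Lemma beta_system_root (n : nat) (A : nat -> R) (u : R -> R) (r : R) (s : nat -> R)
    (I : R -> Prop) :
  (forall a, I a -> ex_derive u a) ->
  (forall a, I a -> 2 * (a - r) * Derive u a = - u a) ->
  s 0%nat = 1 ->
  (forall k, (1 <= k <= n - 1)%nat -> Defs.sigma n A k = s k + r * s (k - 1)%nat) ->
  Defs.sigma n A n = r * s (n - 1)%nat ->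
  beta_system n A u (fun k a => u a * s (k - 1)%nat) I.
Proof.
  intros Hu Hrel Hs0 Hmid Htop; split; [|split; [|split]].
  - intros k a _ Ha; auto_derive; auto.
  - intros a Ha; rewrite Derive_scal_l; simpl (1 - 1)%nat; rewrite Hs0; ring.
  - intros k a Hk Ha; rewrite !Derive_scal_l, Hmid by exact Hk.
    replace (u a) with (- (2 * (a - r) * Derive u a)) by (rewrite Hrel by exact Ha; ring).
    replace (S k - 1)%nat with k by lia; field.
  - intros a Ha; rewrite Derive_scal_l, Htop.
    replace (u a) with (- (2 * (a - r) * Derive u a)) by (rewrite Hrel by exact Ha; ring).
    field.
Qed.

Lemma beta_system_sumR (n : nat) (A : nat -> R) (xs : nat -> R -> R)
    (bs : nat -> nat -> R -> R) (I : R -> Prop) (m N : nat) :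
  (1 <= n)%nat ->
  (forall i a, (m <= i <= N)%nat -> I a -> ex_derive (xs i) a) ->
  (forall i, (m <= i <= N)%nat -> beta_system n A (xs i) (bs i) I) ->
  beta_system n A (fun a => sumR m N (fun i => xs i a)) (fun k a => sumR m N (fun i => bs i k a)) I.
Proof.
  intros Hn Hx Hsys.
  assert (Hb : forall i k a, (m <= i <= N)%nat -> (1 <= k <= n)%nat -> I a ->
                 ex_derive (bs i k) a)
    by (intros i k a Hi; destruct (Hsys i Hi) as (Hex & _); auto).
  split; [|split; [|split]].
  - intros k a Hk Ha; eexists; apply (is_derive_sumR (fun i => bs i k)).
    intros i Hi; apply Hb; assumption.
  - intros a Ha.
    rewrite (Derive_sumR (fun i => bs i 1%nat)) by (intros i Hi; apply Hb; (assumption || lia)).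
    rewrite (Derive_sumR xs) by (intros i Hi; apply Hx; assumption).
    apply sumR_ext; intros i Hi; destruct (Hsys i Hi) as (_ & H1 & _); auto.
  - intros k a Hk Ha.
    rewrite (Derive_sumR (fun i => bs i (S k))), (Derive_sumR (fun i => bs i k))
      by (intros i Hi; apply Hb; (assumption || lia)).
    rewrite (Derive_sumR xs) by (intros i Hi; apply Hx; assumption).
    rewrite <- !sumR_scal, <- sumR_minus, <- sumR_plus.
    apply sumR_ext; intros i Hi; destruct (Hsys i Hi) as (_ & _ & Hrec & _); auto.
  - intros a Ha.
    rewrite (Derive_sumR (fun i => bs i n)) by (intros i Hi; apply Hb; (assumption || lia)).
    rewrite (Derive_sumR xs) by (intros i Hi; apply Hx; assumption).
    rewrite <- !sumR_scal, <- sumR_minus, <- sumR_plus.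
    symmetry; apply sumR_eq_0; intros i Hi; destruct (Hsys i Hi) as (_ & _ & _ & Hlast).
    symmetry; auto.
Qed.

Lemma beta_system_inv_sqrt (n : nat) (A r eps xi : nat -> R) (s : nat -> nat -> R)
    (I : R -> Prop) :
  (1 <= n)%nat -> A n = 1 ->
  (forall t, sumR 0 n (fun k => A k * t ^ k) = prodR 1 n (fun i => t - r i)) ->
  (forall i t, (1 <= i <= n)%nat ->
     prodR 1 n (fun l => if Nat.eqb l i then 1 else t - r l) =
     sumR 0 (n - 1) (fun m => (-1) ^ m * s i m * t ^ (n - 1 - m))) ->
  (forall i a, (1 <= i <= n)%nat -> I a -> eps i * (a - r i) > 0) ->
  beta_system n A
    (fun a => sumR 1 n (fun i => xi i / sqrt (eps i * (a - r i))))
    (fun k a => sumR 1 n (fun i => xi i / sqrt (eps i * (a - r i)) * s i (k - 1)%nat)) I.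
Proof.
  intros Hn HAn HF Hs Hpos.
  apply (beta_system_sumR n A (fun i a => xi i / sqrt (eps i * (a - r i)))
           (fun i k a => xi i / sqrt (eps i * (a - r i)) * s i (k - 1)%nat) I 1 n Hn).
  - intros i a Hi Ha; eexists; apply is_derive_div_sqrt, Hpos; assumption.
  - intros i Hi.
    destruct (sigma_root_factor n A (r i) (s i) Hn HAn) as (Hs0 & Hmid & Htop).
    { intros t; rewrite HF, (prodR_D1 _ 1 n i), Hs by lia; reflexivity. }
    apply (beta_system_root n A (fun a => xi i / sqrt (eps i * (a - r i))) (r i) (s i));
      try assumption.
    + intros a Ha; eexists; apply is_derive_div_sqrt, Hpos; assumption.
    + intros a Ha; specialize (Hpos i a Hi Ha).
      replace (Derive (fun a => xi i / sqrt (eps i * (a - r i))) a)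
        with (- (xi i / sqrt (eps i * (a - r i))) / (2 * (a - r i)))
        by (symmetry; apply is_derive_unique, is_derive_div_sqrt, Hpos).
      field; split; [apply Rgt_not_eq, sqrt_lt_R0, Hpos | intros E; rewrite E in Hpos; lra].
Qed.

(* Part 1 uses only [x''] and not [lo >= 0]. *)
Theorem proposition10 (n : nat) (hn : (2 <= n)%nat) :
  (* Part 1 *)
  (forall (A : nat -> R) (lo hi : Rbar) (x : R -> R) (beta : nat -> R -> R),
     A n = 1 ->
     Rbar_le (Finite 0) lo -> Rbar_lt lo hi ->
     (forall k a, in_interval lo hi a -> ex_derive_n x k a) ->
     (forall a, in_interval lo hi a -> Derive x a <> 0) ->
     beta_system n A x beta (in_interval lo hi) ->
     forall a y pa py, in_interval lo hi a ->
       PB (Hf x) (S1f n A beta x) a y pa py = 0)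
  /\
  (* Part 2 *)
  (forall (A : nat -> R) (r eps xi : nat -> R) (s : nat -> nat -> R)
          (lo hi : Rbar),
     A n = 1 ->
     (forall t, sumR 0 n (fun k => A k * t ^ k) = prodR 1 n (fun i => t - r i)) ->
     (forall i j, (1 <= i <= n)%nat -> (1 <= j <= n)%nat -> i <> j -> r i <> r j) ->
     (* sigma^i_m defined by prod_{l<>i}(t - a_l) = sum_{m=0}^{n-1} (-1)^m sigma^i_m t^{n-1-m} *)
     (forall i t, (1 <= i <= n)%nat ->
        prodR 1 n (fun l => if Nat.eqb l i then 1 else t - r l) =
        sumR 0 (n - 1) (fun m => (-1) ^ m * s i m * t ^ (n - 1 - m))) ->
     (forall i, (1 <= i <= n)%nat -> eps i = 1 \/ eps i = -1) ->
     Rbar_le (Finite 0) lo -> Rbar_lt lo hi ->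
     (forall i a, (1 <= i <= n)%nat -> in_interval lo hi a -> eps i * (a - r i) > 0) ->
     beta_system n A
       (fun a => sumR 1 n (fun i => xi i / sqrt (eps i * (a - r i))))
       (fun k a => sumR 1 n (fun i => xi i / sqrt (eps i * (a - r i)) * s i (k - 1)%nat))
       (in_interval lo hi)).
Proof.
  split.
  - intros A lo hi x beta HAn _ _ Hx Hx' Hsys a y pa py Ha.
    exact (PB_Hf_S1_eq_0 n A x beta _ a y pa py ltac:(lia) HAn Ha (Hx' a Ha) (Hx 2%nat a Ha) Hsys).
  - intros A r eps xi s lo hi HAn HF _ Hs _ _ _ Hpos.
    exact (beta_system_inv_sqrt n A r eps xi s _ ltac:(lia) HAn HF Hs Hpos).
Qed.
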